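(* Let $E$ be a finite directed graph and let $A$ be $KE$ or $L_K(E)$ with its standard filtration $\mathcal{F}$. Let $t(A,\mathcal{F})=(\dim(A),\mathrm{GKdim}(A),\mathrm{h}_{\mathrm{alg}}(A))$. Then exactly one of the following holds: (1) $t(A,\mathcal{F})=(k,0,0)$ for some $k<\infty$; (2) $t(A,\mathcal{F})=(\infty,l,0)$ for some $l<\infty$; (3) $t(A,\mathcal{F})=(\infty,\infty,m)$ for some $m<\infty$.
   Context: A finite directed graph $E=(E^0,E^1,s,r)$ has finitely many vertices and edges, with source and range maps $s,r:E^1\to E^0$. Paths are finite sequences $e_1\cdots e_n$ of edges with $r(e_i)=s(e_{i+1})$; vertices are paths of length $0$. The path algebra $KE$ over a field $K$ has basis all paths with concatenation product (zero when not composable); its standard filtration $V_n$ is the span of paths of length $\le n$. The Leavitt path algebra $L_K(E)$ is the $K$-algebra generated by $E^0\cup E^1\cup\{e^*:e\in E^1\}$ subject to: $vw=\delta_{v,w}v$ for vertices; $s(e)e=e=er(e)$ and $r(e)e^*=e^*=e^*s(e)$; $e^*f=\delta_{e,f}r(e)$ for $e,f\in E^1$; $\sum_{s(e)=v}ee^*=v$ for every vertex $v$ with $0<|s^{-1}(v)|<\infty$. Its standard filtration $W_n$ is the span of elements $\lambda\mu^*$ with $\lambda,\mu$ paths and $l(\lambda)+l(\mu)\le n$. For a filtration $\{V_n\}$ of an algebra $A$, $\mathrm{h}_{\mathrm{alg}}(A)=0$ if $A$ is finite-dimensional and $\limsup_n\frac1n\log\dim(V_n/V_{n-1})$ otherwise.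 $\mathrm{GKdim}(A)=\limsup_{n}\log\dim(V^n)/\log n$ for a finite-dimensional generating subspace $V$, where $V^n$ is the span of products of at most $n$ elements of $V$. *)

From HB Require Import structures.
From mathcomp Require Import all_boot all_order all_algebra.
From mathcomp Require Import all_classical all_reals all_analysis.

Set Implicit Arguments.
Unset Strict Implicit.
Unset Printing Implicit Defensive.
Import Order.TTheory GRing.Theory Num.Theory.
Local Open Scope ring_scope.

Section LinAlg.
Variables (K : fieldType) (A : lmodType K).

Definition span (S : A -> Prop) : A -> Prop :=
  fun x => exists (n : nat) (c : 'I_n -> K) (a : 'I_n -> A),
      (forall i, S (a i)) /\ x = \sum_(i < n) c i *: a i.

Definition lin_indep (n : nat) (a : 'I_n -> A) : Prop :=
  forall c : 'I_n -> K, \sum_(i < n) c i *: a i = 0 -> forall i, c i = 0.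

Definition dim_is (W : A -> Prop) (d : nat) : Prop :=
  exists a : 'I_d -> A, (forall i, W (a i)) /\ lin_indep a /\
     (forall x, W x -> span (fun y => exists i, y = a i) x).

Definition findim (W : A -> Prop) : Prop := exists d, dim_is W d.

(* the dimension of W as a natural number (meaningful when findim W) *)
Definition dimn (W : A -> Prop) : nat :=
  match pselect (findim W) with
  | left H => projT1 (cid H)
  | right _ => 0%N
  end.

End LinAlg.

Definition is_Kalg (K : fieldType) (A : lmodType K) (mul : A -> A -> A) : Prop :=
  (forall x y z, mul x (mul y z) = mul (mul x y) z) /\
  (forall x y z, mul (x + y) z = mul x z + mul y z) /\
  (forall x y z, mul x (y + z) = mul x y + mul x z) /\
  (forall (a : K) x y, mul (a *: x) y = a *: mul x y) /\
  (forall (a : K) x y, mul x (a *: y) = a *: mul x y).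

Definition is_alg_hom (K : fieldType) (A B : lmodType K)
   (mulA : A -> A -> A) (mulB : B -> B -> B) (f : A -> B) : Prop :=
  (forall (a : K) x y, f (a *: x + y) = a *: f x + f y) /\
  (forall x y, f (mulA x y) = mulB (f x) (f y)).

Section Invariants.
Variables (R : realType) (K : fieldType) (A : lmodType K) (mul : A -> A -> A).

(* V^n : span of the products of at most n (and at least one) elements of V *)
Definition powsp (V : A -> Prop) (n : nat) : A -> Prop :=
  span (fun y => exists (x : A) (l : seq A), (size l < n)%N /\ V x /\
          (forall z, z \in l -> V z) /\ y = foldl mul x l).

(* GKdim computed with the finite-dimensional generating subspace V *)
Definition GKdim (V : A -> Prop) : \bar R :=
  limn_esup (fun n => ((ln ((dimn (powsp V n))%:R : R)) / ln (n%:R : R))%:E).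

(* dim (F n / F (n-1)), with F (-1) = 0 *)
Definition grdim (F : nat -> A -> Prop) (n : nat) : nat :=
  (dimn (F n) - (if n is m.+1 then dimn (F m) else 0))%N.

Definition halg (F : nat -> A -> Prop) : \bar R :=
  if `[< findim (fun _ : A => True) >] then 0%E
  else limn_esup (fun n => if (0 < grdim F n)%N
                           then ((ln ((grdim F n)%:R : R)) / (n%:R : R))%:E
                           else -oo%E).

(* t(A,F) = (dim A, GKdim A, h_alg A); GKdim computed with V = F 1 *)
Definition trichotomy (F : nat -> A -> Prop) : Prop :=
  let full := fun _ : A => True in
  let T1 := exists k : nat, dim_is full k /\ GKdim (F 1%N) = 0%E /\ halg F = 0%E in
  let T2 := ~ findim full /\ (exists l : R, GKdim (F 1%N) = l%:E) /\ halg F = 0%E in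
  let T3 := ~ findim full /\ GKdim (F 1%N) = +oo%E /\ (exists m : R, halg F = m%:E) in
  (T1 \/ T2 \/ T3) /\ ~ (T1 /\ T2) /\ ~ (T1 /\ T3) /\ ~ (T2 /\ T3).

End Invariants.

(* A (raw) path is a pair (v, [:: e1; ...; en]) : it is a path when     *)
(* n = 0 (the vertex v) or s e1 = v and r e_i = s e_(i+1).              *)
Section Graphs.
Variables (V Ed : finType) (s r : Ed -> V).

Definition gpath := (V * seq Ed)%type.

Definition is_gpath (p : gpath) : bool :=
  (if p.2 is e :: _ then s e == p.1 else true) &&
  sorted (fun e f => r e == s f) p.2.

Definition glen (p : gpath) : nat := size p.2.
Definition gsrc (p : gpath) : V := p.1.
Definition grng (p : gpath) : V := last p.1 (map r p.2).
Definition gcat (p q : gpath) : gpath := (p.1, p.2 ++ q.2).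

Section PathAlg.
Variables (K : fieldType) (A : lmodType K) (mul : A -> A -> A) (b : gpath -> A).

Definition IsPathAlgebra : Prop :=
  is_Kalg mul /\
  (forall (n : nat) (p : 'I_n -> gpath), injective p ->
      (forall i, is_gpath (p i)) -> lin_indep (fun i => b (p i))) /\
  (forall x, span (fun y => exists p, is_gpath p /\ y = b p) x) /\
  (forall p q, is_gpath p -> is_gpath q ->
      mul (b p) (b q) = if grng p == gsrc q then b (gcat p q) else 0).

Definition path_filtration (n : nat) : A -> Prop :=
  span (fun y => exists p, is_gpath p /\ (glen p <= n)%N /\ y = b p).
End PathAlg.

Section Leavitt.
Variables (K : fieldType).

(* the Leavitt path algebra relations for elements pv v, se e (= e), ss e (= e^* ) *)
Definition LeavittRel (B : lmodType K) (mul : B -> B -> B)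
    (pv : V -> B) (se ss : Ed -> B) : Prop :=
  (forall v w, mul (pv v) (pv w) = if v == w then pv v else 0) /\
  (forall e, mul (pv (s e)) (se e) = se e /\ mul (se e) (pv (r e)) = se e) /\
  (forall e, mul (pv (r e)) (ss e) = ss e /\ mul (ss e) (pv (s e)) = ss e) /\
  (forall e f, mul (ss e) (se f) = if e == f then pv (r e) else 0) /\
  (forall v, (exists e, s e == v) ->
      \sum_(e | s e == v) mul (se e) (ss e) = pv v).

Inductive lgen := LVert of V | LEdge of Ed | LGhost of Ed.

Variables (A : lmodType K) (mul : A -> A -> A) (pv : V -> A) (se ss : Ed -> A).

Definition lgen_val (g : lgen) : A :=
  match g with LVert v => pv v | LEdge e => se e | LGhost e => ss e end.

(* (A, mul, pv, se, ss) is L_K(E): the K-algebra generated by the vertices,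
   edges and ghost edges subject to the Leavitt relations, i.e. it is
   generated by them, satisfies the relations, and every family satisfying
   the relations in any K-algebra is the image of an algebra homomorphism. *)
Definition IsLeavitt : Prop :=
  is_Kalg mul /\ LeavittRel mul pv se ss /\
  (forall x, span (fun y => exists (g : lgen) (w : seq lgen),
                     y = foldl mul (lgen_val g) (map lgen_val w)) x) /\
  (forall (B : lmodType K) (mulB : B -> B -> B) (qv : V -> B) (qe qs : Ed -> B),
     is_Kalg mulB -> LeavittRel mulB qv qe qs ->
     exists f : A -> B, is_alg_hom mul mulB f /\
       (forall v, f (pv v) = qv v) /\ (forall e, f (se e) = qe e) /\
       (forall e, f (ss e) = qs e)).

Definition path_el (p : gpath) : A := foldl mul (pv p.1) (map se p.2).
(* mu^* = fn^* ... f1^*  (w if n = 0) *)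
Definition ghost_el (p : gpath) : A := foldr mul (pv p.1) (map ss (rev p.2)).

Definition leavitt_filtration (n : nat) : A -> Prop :=
  span (fun y => exists lam mu, is_gpath lam /\ is_gpath mu /\
          (glen lam + glen mu <= n)%N /\ y = mul (path_el lam) (ghost_el mu)).
End Leavitt.

End Graphs.

(** Both standard filtrations [F] are increasing, exhaustive, spanned at
    level [n] by at most [C ^ n.+1] vectors (count the paths, resp. pairs of
    paths, of length at most [n]), and comparable with the powers of [F 1]:
    [F n <= (F 1) ^ n.+2] and [(F 1) ^ m <= F (k * m)] for a fixed [k].

    If [A] is finite dimensional, the powers of [F 1] have bounded dimension,
    so [GKdim = 0], and [h_alg = 0] by definition.  Otherwise [dim F n] is
    unbounded, so [dim (F n / F n.-1) > 0] infinitely often and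
    [0 <= h_alg <= 2 ln C].  If moreover [GKdim = l] is finite, then
    [dim F n <= dim (F 1) ^ n.+2 <= (n + 2) ^ (l + 1)] eventually, whence
    [ln dim (F n / F n.-1) / n -> 0] and [h_alg = 0].  Since [GKdim >= 0],
    it is either finite or [+oo], which yields the trichotomy. *)

From Pilot Require Import Defs.
From HB Require Import structures.
From mathcomp Require Import all_boot all_order all_algebra.
From mathcomp Require Import all_classical all_reals all_analysis.
From mathcomp Require Import ring lra zify.

Set Implicit Arguments.
Unset Strict Implicit.
Unset Printing Implicit Defensive.
Import Order.TTheory GRing.Theory Num.Theory.
Local Open Scope ring_scope.
Local Notation span := Defs.span.

Section Span.
Variables (K : fieldType) (A : lmodType K).
Implicit Types (S T W : A -> Prop).

Definition fam_cons (X : Type) n (x0 : X) (x : 'I_n -> X) : 'I_n.+1 -> X :=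
  fun i => if unlift ord0 i is Some j then x j else x0.

Lemma fam_cons0 (X : Type) n (x0 : X) (x : 'I_n -> X) : fam_cons x0 x ord0 = x0.
Proof. by rewrite /fam_cons unlift_none. Qed.

Lemma fam_consS (X : Type) n (x0 : X) (x : 'I_n -> X) i :
  fam_cons x0 x (lift ord0 i) = x i.
Proof. by rewrite /fam_cons liftK. Qed.

Lemma fam_consP (X : Type) (P : X -> Prop) n (x0 : X) (x : 'I_n -> X) :
  P x0 -> (forall i, P (x i)) -> forall i, P (fam_cons x0 x i).
Proof. by move=> Px0 Px i; rewrite /fam_cons; case: unlift. Qed.

Definition fam_range (X : Type) (a : X -> A) : A -> Prop := fun y => exists i, y = a i.

Lemma span_in S x : S x -> span S x.
Proof.
move=> Sx; exists 1%N, (fun _ => 1), (fun _ => x); split => //.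
by rewrite big_ord1 scale1r.
Qed.

Lemma span0 S : span S 0.
Proof. by exists 0%N, (fun _ => 0), (fun _ => 0); split; [case|rewrite big_ord0]. Qed.

Lemma span_cons S c y x : S y -> span S x -> span S (c *: y + x).
Proof.
move=> Sy [n [d [a [Sa ->]]]].
exists n.+1, (fam_cons c d), (fam_cons y a); split; first exact: fam_consP.
rewrite big_ord_recl !fam_cons0; congr (_ + _).
by apply: eq_bigr => i _; rewrite !fam_consS.
Qed.

Lemma span_ind S (P : A -> Prop) : P 0 ->
  (forall c y x, S y -> P x -> P (c *: y + x)) -> forall x, span S x -> P x.
Proof.
move=> P0 Pcons x [n [c [a [Sa ->]]]]; elim: n c a Sa => [|n IH] c a Sa.
  by rewrite big_ord0.
by rewrite big_ord_recl; apply: Pcons => //; apply: (IH (c \o lift ord0)).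
Qed.

Lemma span_add S x y : span S x -> span S y -> span S (x + y).
Proof.
move=> Sx Sy; move: x Sx; apply: span_ind; first by rewrite add0r.
by move=> c z x Sz Sxy; rewrite -addrA; apply: span_cons.
Qed.

Lemma span_scale S a x : span S x -> span S (a *: x).
Proof.
move: x; apply: span_ind; first by rewrite scaler0; apply: span0.
by move=> c y x Sy Sx; rewrite scalerDr scalerA; apply: span_cons.
Qed.

Lemma sub_span S T : (forall y, S y -> span T y) -> forall x, span S x -> span T x.
Proof.
move=> ST; apply: span_ind; first exact: span0.
by move=> c y x Sy Tx; apply: span_add => //; apply/span_scale/ST.
Qed.

Lemma span_idem S x : span (span S) x -> span S x.
Proof. exact: sub_span. Qed.

Lemma span_sum S n (c : 'I_n -> K) (a : 'I_n -> A) :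
  (forall i, span S (a i)) -> span S (\sum_(i < n) c i *: a i).
Proof.
move=> Sa; elim/big_ind: _ => //; [exact: span0|exact: span_add|].
by move=> i _; apply: span_scale.
Qed.

Lemma span_fam_rangeP N (a : 'I_N -> A) x :
  span (fam_range a) x -> exists c : 'I_N -> K, x = \sum_i c i *: a i.
Proof.
move: x; apply: span_ind.
  by exists (fun _ => 0); rewrite big1 // => i _; rewrite scale0r.
move=> c _ x [i0 ->] [d ->].
exists (fun i => d i + (if i == i0 then c else 0)).
under [RHS]eq_bigr do rewrite scalerDl.
rewrite big_split /= addrC; congr (_ + _).
by rewrite (bigD1 i0) //= eqxx big1 ?addr0 // => j /negbTE ->; rewrite scale0r.
Qed.

(* Steinitz: a nonzero vector [u] with [u *m C = 0], where [C] is the matrix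
   of coefficients of the [x j] in terms of the [a i], is a linear relation
   among the [x j]. *)
Lemma lin_indep_leq_span d N (x : 'I_d -> A) (a : 'I_N -> A) :
  lin_indep x -> (forall j, span (fam_range a) (x j)) -> (d <= N)%N.
Proof.
move=> indep xa; have [f xf] := choice (fun j => span_fam_rangeP (xa j)).
pose C : 'M[K]_(d, N) := \matrix_(j, i) f j i.
rewrite leqNgt; apply/negP => ltNd.
have /rowV0Pn [u /sub_kermxP uC u_neq0] : kermx C != 0.
  rewrite -mxrank_eq0 mxrank_ker subn_eq0 -ltnNge.
  exact: leq_ltn_trans (rank_leq_col C) ltNd.
have rel : \sum_(j < d) u 0 j *: x j = 0.
  transitivity (\sum_(i < N) (u *m C) 0 i *: a i); last first.
    by rewrite uC big1 // => i _; rewrite mxE scale0r.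
  under eq_bigr do rewrite xf scaler_sumr.
  rewrite exchange_big /=; apply: eq_bigr => i _.
  rewrite mxE scaler_suml; apply: eq_bigr => j _.
  by rewrite scalerA [C j i]mxE.
by move/negP: u_neq0; apply; apply/eqP/rowP => j; rewrite (indep _ rel) mxE.
Qed.

Lemma lin_indep_fam_cons d (x : 'I_d -> A) y :
  lin_indep x -> ~ span (fam_range x) y -> lin_indep (fam_cons y x).
Proof.
move=> indep y_out c; rewrite big_ord_recl fam_cons0.
under eq_bigr do rewrite fam_consS.
move=> rel; have c0 : c ord0 = 0.
  apply: contrapT => /eqP c0; apply: y_out.
  have -> : y = \sum_(i < d) (- (c ord0)^-1 * c (lift ord0 i)) *: x i.
    under eq_bigr do rewrite -scalerA.
    rewrite -scaler_sumr.
    have -> : \sum_(i < d) c (lift ord0 i) *: x i = - (c ord0 *: y).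
      by apply/eqP; rewrite -addr_eq0 addrC rel.
    by rewrite scalerN scaleNr opprK scalerA mulVf // scale1r.
  by apply: span_sum => i; apply: span_in; exists i.
rewrite c0 scale0r add0r in rel.
have c_lift0 := indep _ rel.
by move=> i; case: (unliftP ord0 i) => [j ->|->] //; apply: c_lift0.
Qed.

Lemma dimnP W : findim W -> dim_is W (dimn W).
Proof. by rewrite /dimn; case: pselect => // W_fin _; apply: (projT2 (cid W_fin)). Qed.

Lemma findim_span_fam N (a : 'I_N -> A) W :
  (forall x, W x -> span (fam_range a) x) -> findim W /\ (dimn W <= N)%N.
Proof.
move=> Wa.
have indep_le d (x : 'I_d -> A) : (forall j, W (x j)) -> lin_indep x -> (d <= N)%N.
  by move=> Wx indep; apply: lin_indep_leq_span indep _ => j; apply: Wa.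
have W_fin : findim W.
  pose P d := `[< exists x : 'I_d -> A, (forall j, W (x j)) /\ lin_indep x >].
  have P0 : exists d, P d.
    by exists 0%N; apply/asboolP; exists (fun _ => 0); split => [[]|c _ []].
  have P_le d : P d -> (d <= N)%N by move=> /asboolP [x [Wx indep]]; apply: indep_le Wx indep.
  case: (ex_maxnP P0 P_le) => dm /asboolP [x [Wx indep]] dm_max.
  exists dm, x; split => //; split => // y Wy; apply: contrapT => y_out.
  have /dm_max : P dm.+1.
    apply/asboolP; exists (fam_cons y x); split; first exact: fam_consP.
    exact: lin_indep_fam_cons.
  by rewrite ltnn.
by split => //; have [b [Wb [indep _]]] := dimnP W_fin; apply: indep_le Wb indep.
Qed.

Lemma findim_span_fin (I : finType) (f : I -> A) W :
  (forall x, W x -> span (fam_range f) x) -> findim W /\ (dimn W <= #|I|)%N.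
Proof.
move=> Wf; apply: (findim_span_fam (a := f \o enum_val)) => x /Wf.
apply: sub_span => _ [i ->]; apply: span_in.
by exists (enum_rank i); rewrite /= enum_rankK.
Qed.

Lemma findim_sub_span W W' : findim W' -> (forall x, W x -> span W' x) ->
  findim W /\ (dimn W <= dimn W')%N.
Proof.
move=> W'_fin WW'; have [b [W'b [_ b_span]]] := dimnP W'_fin.
by apply: findim_span_fam => x /WW'; apply: sub_span => y; apply: b_span.
Qed.

Lemma lin_indep_leq_dimn W m (x : 'I_m -> A) : findim W -> (forall j, W (x j)) ->
  lin_indep x -> (m <= dimn W)%N.
Proof.
move=> W_fin Wx indep; have [b [_ [_ b_span]]] := dimnP W_fin.
exact: lin_indep_leq_span indep (fun j => b_span _ (Wx j)).
Qed.

Lemma dimn_geq_sub W W' : (forall x, W x -> W' x) -> findim W' ->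
  (dimn W' <= dimn W)%N -> forall x, W' x -> span W x.
Proof.
move=> WW' W'_fin le_dim x W'x.
have W_fin := (findim_sub_span W'_fin (fun y Wy => span_in (WW' y Wy))).1.
have [b [Wb [indep b_span]]] := dimnP W_fin.
apply: (sub_span (S := fam_range b)); first by move=> _ [i ->]; apply/span_in/Wb.
apply: contrapT => x_out.
have := lin_indep_leq_dimn W'_fin (fam_consP W'x (fun j => WW' _ (Wb j)))
  (lin_indep_fam_cons indep x_out).
by move=> /leq_trans /(_ le_dim); rewrite ltnn.
Qed.

Lemma filtration_le (F : nat -> A -> Prop) : (forall n x, F n x -> F n.+1 x) ->
  forall n m x, (n <= m)%N -> F n x -> F m x.
Proof.
move=> F_mono n m x /subnK <-; elim: (m - n)%N => // k IH /IH.
by rewrite addSn; apply: F_mono.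
Qed.

Lemma span_exhaustive (F : nat -> A -> Prop) S :
  (forall n x, F n x -> F n.+1 x) -> (forall n x, span (F n) x -> F n x) ->
  (forall y, S y -> exists n, F n y) -> forall x, span S x -> exists n, F n x.
Proof.
move=> F_mono F_span SF; apply: span_ind; first by exists 0%N; apply/F_span/span0.
move=> c y x /SF [k Fy] [n Fx]; exists (maxn n k); apply/F_span/span_cons.
  exact: (filtration_le F_mono (leq_maxr n k) Fy).
exact/span_in/(filtration_le F_mono (leq_maxl n k) Fx).
Qed.

End Span.

Section Limsup.
Variable R : realType.
Implicit Types (u : nat -> \bar R).
Local Open Scope ereal_scope.

Lemma limn_esup_le_eventually u a N :
  (forall n, (N <= n)%N -> u n <= a) -> limn_esup u <= a.
Proof.
move=> uN; rewrite limn_esup_lim; apply: lime_le; first exact: is_cvg_esups.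
near=> n; apply: ge_ereal_sup => _ [k /= nk <-]; apply: uN.
by apply: leq_trans nk; near: n; exists N.
Unshelve. all: by end_near. Qed.

Lemma limn_esup_ge_often u a :
  (forall N, exists n, (N <= n)%N /\ a <= u n) -> a <= limn_esup u.
Proof.
move=> u_often; rewrite limn_esup_lim; apply: lime_ge; first exact: is_cvg_esups.
apply: nearW => m; have [n [mn an]] := u_often m; apply: le_trans an _.
by apply: ereal_sup_ubound; exists n.
Qed.

Lemma limn_esup_lt_eventually u a :
  limn_esup u < a -> exists N, forall n, (N <= n)%N -> u n < a.
Proof.
rewrite limn_esup_lim (cvg_lim _ (@cvg_esups_inf _ u)) //.
move=> /ereal_inf_lt [_ [N _ <-] lt_a]; exists N => n Nn.
by apply: le_lt_trans lt_a; apply: ereal_sup_ubound; exists n.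
Qed.

Lemma limn_esup_le0 u :
  (forall e : R, (0 < e)%R -> exists N, forall n, (N <= n)%N -> u n <= e%:E) ->
  limn_esup u <= 0.
Proof.
move=> u_small; apply/lee_addgt0Pr => e e0; rewrite add0e.
by have [N uN] := u_small e e0; apply: limn_esup_le_eventually uN.
Qed.

End Limsup.

Section Logarithm.
Variable R : realType.

Lemma ln_nat_ge0 (k : nat) : 0 <= ln (k%:R : R).
Proof. by case: k => [|k]; [rewrite ln0 | rewrite ln_ge0 // ler1n]. Qed.

Lemma ln_ratio_le_eventually (k : nat) (e : R) : 0 < e ->
  exists N, forall n, (N <= n)%N -> ln (k%:R : R) / ln n%:R <= e.
Proof.
move=> e0; pose M := expR (ln (k%:R : R) / e).
exists (maxn 2 (Num.bound M)) => n; rewrite geq_max => /andP [n2 nb].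
have M0 : 0 < M by apply: expR_gt0.
have nM : M <= n%:R.
  by apply/ltW/(lt_le_trans (archi_boundP (ltW M0))); rewrite ler_nat.
have ln_n_gt0 : 0 < ln (n%:R : R) by apply: ln_gt0; rewrite ltr1n.
have : ln M <= ln (n%:R : R) by rewrite ler_ln // posrE (lt_le_trans M0 nM).
by rewrite /M expRK ler_pdivrMr // => ?; rewrite ler_pdivrMr // mulrC.
Qed.

Lemma ln_le_linear (M x : R) : 0 < M -> 0 < x -> ln x <= ln M + x / M.
Proof.
move=> M0 x0; have xM0 : 0 < x / M by rewrite divr_gt0.
rewrite -[x in ln x](divfK (lt0r_neq0 M0)) mulrC lnM ?posrE //.
by rewrite lerD2l ltW // ln_sublinear.
Qed.

Lemma ln_le_linear_eventually (L e : R) : 0 < L -> 0 < e ->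
  exists N, forall n, (N <= n)%N -> L * ln n.+2%:R <= e * n%:R.
Proof.
move=> L0 e0; pose M := 2 * L / e; pose X := 2 * (L * `|ln M| + e) / e.
have M0 : 0 < M by rewrite divr_gt0 ?mulr_gt0.
have X0 : 0 <= X by rewrite divr_ge0 ?mulr_ge0 ?addr_ge0 ?mulr_ge0 // ltW.
exists (Num.bound X) => n nb.
have nX : X < n%:R by apply: lt_le_trans (archi_boundP X0) _; rewrite ler_nat.
have := ler_wpM2l (ltW L0) (ln_le_linear M0 (ltr0Sn R n.+1)).
have -> : L * (ln M + n.+2%:R / M) = L * ln M + e / 2 * (n%:R + 2).
  by rewrite /M -addn2 natrD; field; rewrite (lt0r_neq0 e0) (lt0r_neq0 L0).
have Xe : X * e = 2 * (L * `|ln M| + e) by rewrite /X; field; apply: lt0r_neq0.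
have : L * ln M <= L * `|ln M| by rewrite ler_pM2l // ler_norm.
have : X * e < n%:R * e by rewrite ltr_pM2r.
nra.
Qed.

End Logarithm.

Section Invariants.
Variables (R : realType) (K : fieldType) (A : lmodType K) (mul : A -> A -> A).
Local Notation full := (fun _ : A => True).

Lemma GKdim_ge0 V : (0 <= GKdim R mul V)%E.
Proof.
apply: limn_esup_ge_often => N; exists N; split => //.
by rewrite lee_fin divr_ge0 // ln_nat_ge0.
Qed.

Lemma GKdim_bounded k V :
  (forall m, (dimn (powsp mul V m) <= k)%N) -> GKdim R mul V = 0%E.
Proof.
move=> dim_le; apply: le_anti; rewrite GKdim_ge0 andbT.
apply: limn_esup_le0 => e e0; have [N ratio_le] := ln_ratio_le_eventually k e0.
exists (maxn N 2) => n; rewrite geq_max => /andP [Nn n2].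
rewrite lee_fin; apply: le_trans (ratio_le n Nn).
have ln_n_gt0 : 0 < ln (n%:R : R) by apply: ln_gt0; rewrite ltr1n.
rewrite ler_pM2r ?invr_gt0 //.
have [->|dim_gt0] := posnP (dimn (powsp mul V n)); first by rewrite ln0 // ln_nat_ge0.
by rewrite ler_ln ?posrE ?ltr0n ?ler_nat // (leq_trans dim_gt0).
Qed.

Definition halg_seq (F : nat -> A -> Prop) (n : nat) : \bar R :=
  if (0 < grdim F n)%N then ((ln ((grdim F n)%:R : R)) / (n%:R : R))%:E else -oo%E.

Lemma halg_infdim F : ~ findim full -> halg R F = limn_esup (halg_seq F).
Proof. by move=> A_inf; rewrite /halg asboolF. Qed.

Lemma trichotomyP F :
  (findim full -> GKdim R mul (F 1) = 0%E) ->
  (forall l : R, ~ findim full -> GKdim R mul (F 1) = l%:E ->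
     halg R F = 0%E) ->
  (~ findim full -> GKdim R mul (F 1) = +oo%E ->
     exists m : R, halg R F = m%:E) ->
  trichotomy R mul F.
Proof.
move=> GK0 halg0 halg_fin; split; last first.
  split; [|split].
  - by case=> -[k [dim_k _]] [[]]; exists k.
  - by case=> -[k [dim_k _]] [[]]; exists k.
  - by case=> -[_ [[l ->]] _] [_ []].
have [A_fin|A_inf] := pselect (findim full).
  have [k dim_k] := A_fin; left; exists k.
  by rewrite GK0 // /halg asboolT.
right; case GK : (GKdim R mul (F 1)) (GKdim_ge0 (F 1)) => [l| |] // _.
  by left; rewrite (halg0 l) //; split => //; split => //; exists l.
by right; split => //; split => //; apply: halg_fin.
Qed.

End Invariants.

Section FilteredTrichotomy.
Variables (R : realType) (K : fieldType) (A : lmodType K) (mul : A -> A -> A).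
Variables (F : nat -> A -> Prop) (C : nat).
Hypothesis F_mono : forall n x, F n x -> F n.+1 x.
Hypothesis F_exhaustive : forall x, exists n, F n x.
Hypothesis F_findim : forall n, findim (F n).
Hypothesis C_gt0 : (0 < C)%N.
Hypothesis dimn_F_le : forall n, (dimn (F n) <= C ^ n.+1)%N.
Hypothesis F_sub_powsp : forall n x, F n x -> powsp mul (F 1) n.+2 x.
Hypothesis powsp_sub_F : forall m, exists N, forall x, powsp mul (F 1) m x -> F N x.

Local Notation full := (fun _ : A => True).

Lemma findim_powsp m : findim (powsp mul (F 1) m).
Proof.
have [N powF] := powsp_sub_F m.
exact: (findim_sub_span (F_findim N) (fun x Px => span_in (powF x Px))).1.
Qed.

Lemma dimn_F_le_powsp n : (dimn (F n) <= dimn (powsp mul (F 1) n.+2))%N.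
Proof. exact: (findim_sub_span (findim_powsp _) (fun x Fx => span_in (F_sub_powsp Fx))).2. Qed.

Lemma grdim_le_dimn n : (grdim F n <= dimn (F n))%N.
Proof. exact: leq_subr. Qed.

(* If the dimensions stabilised from [N] on, [F N] would contain every [F n],
   hence all of [A]. *)
Lemma grdim_gt0_often : ~ findim full -> forall N, exists n, (N <= n)%N /\ (0 < grdim F n)%N.
Proof.
move=> A_inf N; apply: contrapT => grdim0.
have dim_stable k : (dimn (F (k + N)) <= dimn (F N))%N.
  elim: k => // k IH; rewrite addSn; apply: leq_trans IH.
  rewrite leqNgt -subn_gt0; apply/negP => gt0.
  by apply: grdim0; exists (k + N).+1; rewrite leqW ?leq_addl.
apply/A_inf/(findim_sub_span (F_findim N) _).1 => x _.
have [m Fm] := F_exhaustive x.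
apply: (dimn_geq_sub (W' := F (m + N)%N)) (dim_stable m) _ _.
- by move=> y; apply: (filtration_le F_mono (leq_addl m N)).
- exact: F_findim.
- exact: (filtration_le F_mono (leq_addr N m) Fm).
Qed.

Lemma halg_seq_ge0 : ~ findim full -> (0 <= limn_esup (halg_seq R F))%E.
Proof.
move=> A_inf; apply: limn_esup_ge_often => N.
have [n [Nn gt0]] := grdim_gt0_often A_inf N; exists n; split => //.
by rewrite /halg_seq gt0 lee_fin divr_ge0 // ln_nat_ge0.
Qed.

Lemma ln_grdim_le n : (0 < grdim F n)%N ->
  ln ((grdim F n)%:R : R) <= ln ((dimn (F n))%:R).
Proof.
move=> gt0; rewrite ler_ln ?posrE ?ltr0n ?ler_nat ?grdim_le_dimn //.
exact: leq_trans gt0 (grdim_le_dimn n).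
Qed.

Lemma halg_seq_le : (limn_esup (halg_seq R F) <= (2 * ln (C%:R : R))%:E)%E.
Proof.
apply: (@limn_esup_le_eventually _ _ _ 1) => n n1; rewrite /halg_seq.
case: ifP => gt0; last by rewrite leNye.
have n_gt0 : 0 < (n%:R : R) by rewrite ltr0n.
have ln_dim_le : ln ((grdim F n)%:R : R) <= ln (C%:R : R) * n.+1%:R.
  apply: le_trans (ln_grdim_le gt0) _.
  have dim_gt0 := leq_trans gt0 (grdim_le_dimn n).
  rewrite mulr_natr -lnXn ?ltr0n // -natrX ler_ln ?posrE ?ltr0n ?ler_nat ?dimn_F_le //.
  by rewrite expn_gt0 C_gt0.
have := ln_nat_ge0 R C; have : 1 <= (n%:R : R) by rewrite ler1n.
rewrite lee_fin ler_pdivrMr // -addn1 natrD in ln_dim_le *; nra.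
Qed.

(* A finite GK dimension [l] bounds [dim F n] by [(n + 2) ^ (l + 1)]. *)
Lemma halg_seq_le0 (l : R) : GKdim R mul (F 1) = l%:E ->
  (limn_esup (halg_seq R F) <= 0)%E.
Proof.
move=> GK_l; have l_ge0 : 0 <= l by rewrite -lee_fin -GK_l GKdim_ge0.
have [N1 powsp_le] : exists N, forall n, (N <= n)%N ->
    ln ((dimn (powsp mul (F 1) n))%:R : R) / ln n%:R < l + 1.
  have /limn_esup_lt_eventually [N lt] : (GKdim R mul (F 1) < (l + 1)%:E)%E.
    by rewrite GK_l lte_fin ltrDl.
  by exists N => n /lt; rewrite lte_fin.
apply: limn_esup_le0 => e e0.
have [N2 ln_le] := ln_le_linear_eventually (ltr_wpDl l_ge0 ltr01) e0.
exists (maxn (maxn N1 N2) 1) => n; rewrite !geq_max => /andP [/andP [n1 n2] n0].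
rewrite /halg_seq; case: ifP => gt0; last by rewrite leNye.
rewrite lee_fin ler_pdivrMr ?ltr0n //; apply: le_trans (ln_le n n2).
have := powsp_le n.+2 (leq_trans n1 (leqW (leqW (leqnn n)))).
have ln_gt0 : 0 < ln (n.+2%:R : R) by apply: ln_gt0; rewrite ltr1n.
rewrite ltr_pdivrMr // => lt; apply/ltW/(le_lt_trans _ lt).
apply: le_trans (ln_grdim_le gt0) _.
have dim_gt0 := leq_trans gt0 (grdim_le_dimn n).
by rewrite ler_ln ?posrE ?ltr0n ?ler_nat ?dimn_F_le_powsp // (leq_trans dim_gt0) ?dimn_F_le_powsp.
Qed.

Theorem filtered_trichotomy : trichotomy R mul F.
Proof.
apply: trichotomyP => [A_fin|l A_inf GK_l|A_inf _].
- have [k [b [_ [_ b_span]]]] := A_fin; apply: (@GKdim_bounded _ _ _ _ k) => m.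
  exact: (findim_span_fam (W := powsp mul (F 1) m) (fun x _ => b_span x I)).2.
- rewrite halg_infdim //; apply: le_anti.
  by rewrite halg_seq_ge0 // (halg_seq_le0 GK_l).
- rewrite halg_infdim //; have := halg_seq_ge0 A_inf; have := halg_seq_le.
  by case: (limn_esup _) => [m _ _| |] //; exists m.
Qed.

End FilteredTrichotomy.

Section Products.
Variables (K : fieldType) (A : lmodType K) (mul : A -> A -> A).

Lemma powsp_sub_filtration (G : nat -> A -> Prop) k : (0 < k)%N ->
  (forall n x, G n x -> G n.+1 x) -> (forall n x, span (G n) x -> G n x) ->
  (forall a x y, G a x -> G 1 y -> G (a + k)%N (mul x y)) ->
  forall m x, powsp mul (G 1) m x -> G (k * m)%N x.
Proof.
move=> k_gt0 G_mono G_span G_mul m x /sub_span pow_x; apply/G_span/pow_x.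
move=> _ [x0 [l [lt_m [Gx0 [Gl ->]]]]]; apply: span_in.
have G_foldl : forall l a y, G a y -> (forall z, z \in l -> G 1 z) ->
    G (a + k * size l)%N (foldl mul y l).
  elim=> [|z l' IH] a y Gy Gl' /=; first by rewrite muln0 addn0.
  rewrite mulnS addnA; apply: IH => [|w wl']; first by apply/G_mul/Gl'/mem_head.
  by apply/Gl'; rewrite in_cons wl' orbT.
apply: (filtration_le G_mono _ (G_foldl l 1%N x0 Gx0 Gl)).
by apply: leq_trans (leq_mul (leqnn k) lt_m); rewrite mulnS leq_add2r.
Qed.

Hypothesis mul_Kalg : is_Kalg mul.

Lemma kalg_mulA x y z : mul x (mul y z) = mul (mul x y) z.
Proof. by case: mul_Kalg. Qed.

Lemma kalg_mul0l y : mul 0 y = 0.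
Proof. by have [_ [_ [_ [mulZl _]]]] := mul_Kalg; have := mulZl 0 0 y; rewrite !scale0r. Qed.

Lemma kalg_mul0r y : mul y 0 = 0.
Proof. by have [_ [_ [_ [_ mulZr]]]] := mul_Kalg; have := mulZr 0 y 0; rewrite !scale0r. Qed.

Lemma span_mull S T x y : span S x -> (forall z, S z -> span T (mul z y)) ->
  span T (mul x y).
Proof.
have [_ [mulDl [_ [mulZl _]]]] := mul_Kalg.
move=> Sx ST; move: x Sx; apply: span_ind; first by rewrite kalg_mul0l; apply: span0.
by move=> c z x Sz Tx; rewrite mulDl mulZl; apply/span_add/Tx/span_scale/ST.
Qed.

Lemma span_mulr S T x y : span S y -> (forall z, S z -> span T (mul x z)) ->
  span T (mul x y).
Proof.
have [_ [_ [mulDr [_ mulZr]]]] := mul_Kalg.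
move=> Sy ST; move: y Sy; apply: span_ind; first by rewrite kalg_mul0r; apply: span0.
by move=> c z y Sz Ty; rewrite mulDr mulZr; apply/span_add/Ty/span_scale/ST.
Qed.

Lemma foldl_mul x y l : foldl mul (mul x y) l = mul x (foldl mul y l).
Proof. by elim: l y => //= z l IH y; rewrite -kalg_mulA IH. Qed.

Lemma foldr_mulr l x y : mul (foldr mul x l) y = foldr mul (mul x y) l.
Proof. by elim: l => //= z l IH; rewrite -kalg_mulA IH. Qed.

Lemma foldr_mul0 l : foldr mul 0 l = 0.
Proof. by elim: l => //= z l ->; rewrite kalg_mul0r. Qed.

Lemma mul_foldr x y l : mul x (foldr mul y l) = foldl mul x (rcons l y).
Proof. by elim: l x => //= z l IH x; rewrite -IH kalg_mulA. Qed.

End Products.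

Lemma leq_mul_expn (a b n : nat) : (0 < b)%N -> (a * b ^ n <= (a.+1 * b) ^ n.+1)%N.
Proof.
move=> b_gt0; rewrite expnMn leq_mul // expnS.
  by apply: leq_trans (leqnSn a) _; rewrite leq_pmulr // expn_gt0 ltnS.
by rewrite leq_pmull.
Qed.

Lemma pmap_tuple (T : Type) n (l : seq T) :
  (size l <= n)%N -> exists t : n.-tuple (option T), pmap id t = l.
Proof.
move=> l_le; have sz : size (map Some l ++ nseq (n - size l) None) == n.
  by rewrite size_cat size_map size_nseq subnKC.
exists (Tuple sz); rewrite /= pmap_cat.
have -> : pmap id (nseq (n - size l) (@None T)) = [::] by elim: (n - size l)%N.
by rewrite cats0; elim: l {l_le sz} => //= x l ->.
Qed.

Section Paths.
Variables (V Ed : finType) (s r : Ed -> V).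

Lemma is_gpath_rcons v es e : is_gpath s r (v, rcons es e) =
  is_gpath s r (v, es) && (grng r (v, es) == s e).
Proof.
case: es => [|e1 es]; first by rewrite /is_gpath /= eq_sym !andbT.
by rewrite /is_gpath /grng /= rcons_path last_map !andbA.
Qed.

Lemma is_gpath_edge e : is_gpath s r (s e, [:: e]).
Proof. by rewrite /is_gpath /= eqxx. Qed.

End Paths.

Section PathAlgebra.
Variables (V Ed : finType) (s r : Ed -> V).
Variables (K : fieldType) (A : lmodType K) (mul : A -> A -> A) (b : gpath V Ed -> A).
Hypothesis KE : IsPathAlgebra s r mul b.
Local Notation F := (path_filtration s r b).

Let mul_Kalg : is_Kalg mul. Proof. by case: KE. Qed.

Let mul_basis : forall p q, is_gpath s r p -> is_gpath s r q ->
  mul (b p) (b q) = if grng r p == gsrc q then b (gcat p q) else 0.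
Proof. by case: KE => _ [_ []]. Qed.

Let basis_span : forall x, span (fun y => exists p, is_gpath s r p /\ y = b p) x.
Proof. by case: KE => _ [_ []]. Qed.

Lemma path_filtration_mono n x : F n x -> F n.+1 x.
Proof.
apply: sub_span => _ [p [p_path [p_len ->]]]; apply: span_in.
by exists p; do 2!split => //; apply: leqW.
Qed.

Lemma path_filtration_exhaustive x : exists n, F n x.
Proof.
apply: (span_exhaustive path_filtration_mono (fun n => @span_idem _ _ _)) (basis_span x).
by move=> _ [p [p_path ->]]; exists (glen p); apply: span_in; exists p.
Qed.

Lemma path_filtration_bounded n :
  findim (F n) /\ (dimn (F n) <= #|{: V * n.-tuple (option Ed)}|)%N.
Proof.
apply: (findim_span_fin (f := fun i : V * n.-tuple (option Ed) => b (i.1, pmap id i.2))).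
apply: sub_span => _ [[v es] [_ [es_len ->]]].
by have [t t_es] := pmap_tuple es_len; apply: span_in; exists (v, t); rewrite /= t_es.
Qed.

Lemma basis_foldl v es : is_gpath s r (v, es) ->
  b (v, es) = foldl mul (b (v, [::])) (map (fun e => b (s e, [:: e])) es).
Proof.
elim/last_ind: es => [//|es e IH]; rewrite is_gpath_rcons => /andP [es_path es_e].
rewrite map_rcons foldl_rcons -IH // mul_basis ?is_gpath_edge //.
by rewrite /gsrc /= es_e /gcat /= cats1.
Qed.

Lemma path_filtration_sub_powsp n x : F n x -> powsp mul (F 1) n.+2 x.
Proof.
apply: sub_span => _ [[v es] [p_path [es_len ->]]]; apply: span_in.
exists (b (v, [::])), (map (fun e => b (s e, [:: e])) es).
split; first by rewrite size_map ltnS leqW.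
split; first by apply: span_in; exists (v, [::]).
split; last exact: basis_foldl.
move=> _ /mapP [e _ ->]; apply: span_in; exists (s e, [:: e]).
by split; [apply: is_gpath_edge|].
Qed.

Lemma path_filtration_mul1 a x y : F a x -> F 1 y -> F (a + 1)%N (mul x y).
Proof.
move=> Fx Fy; apply: (span_mull mul_Kalg Fx) => _ [p [p_path [p_len ->]]].
apply: (span_mulr mul_Kalg Fy) => _ [q [q_path [q_len ->]]].
rewrite mul_basis //; case: ifP => [pq|_]; last exact: span0.
apply: span_in; exists (gcat p q); split; last by rewrite /glen size_cat leq_add.
case: p p_path pq {p_len} => [v es] p_path pq.
case: q q_path q_len pq => [w [|e [|? ?]]] q_path q_len pq; last by move: q_len.
  by rewrite /gcat cats0.
have /eqP w_se : s e == w by move: q_path; rewrite /is_gpath andbT.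
by rewrite /gcat cats1 is_gpath_rcons p_path w_se.
Qed.

Theorem path_trichotomy (R : realType) : trichotomy R mul F.
Proof.
apply: (@filtered_trichotomy R K A mul F (#|V|.+1 * #|Ed|.+1)%N).
- exact: path_filtration_mono.
- exact: path_filtration_exhaustive.
- by move=> n; case: (path_filtration_bounded n).
- by rewrite muln_gt0.
- move=> n; apply: leq_trans (path_filtration_bounded n).2 _.
  by rewrite card_prod card_tuple card_option leq_mul_expn.
- exact: path_filtration_sub_powsp.
- move=> m; exists (1 * m)%N; apply: powsp_sub_filtration => //.
  + exact: path_filtration_mono.
  + by move=> n; apply: span_idem.
  + exact: path_filtration_mul1.
Qed.

End PathAlgebra.

Section LeavittPathAlgebra.
Variables (V Ed : finType) (s r : Ed -> V).
Variables (K : fieldType) (A : lmodType K) (mul : A -> A -> A)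
  (pv : V -> A) (se ss : Ed -> A).
Hypothesis LKE : IsLeavitt s r mul pv se ss.
Local Notation W := (leavitt_filtration s r mul pv se ss).
Local Notation PE := (path_el mul pv se).
Local Notation GE := (ghost_el mul pv ss).
Local Notation gen := (lgen_val pv se ss).

Let mul_Kalg : is_Kalg mul. Proof. by case: LKE. Qed.
Let mulA := kalg_mulA mul_Kalg.
Let mul0l := kalg_mul0l mul_Kalg.
Let mul0r := kalg_mul0r mul_Kalg.

Let vertex_mul_vertex : forall v w, mul (pv v) (pv w) = if v == w then pv v else 0.
Proof. by case: LKE => _ [[]]. Qed.
Let edge_vertices : forall e, mul (pv (s e)) (se e) = se e /\ mul (se e) (pv (r e)) = se e.
Proof. by case: LKE => _ [[_ []]]. Qed.
Let ghost_vertices : forall e, mul (pv (r e)) (ss e) = ss e /\ mul (ss e) (pv (s e)) = ss e.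
Proof. by case: LKE => _ [[_ [_ []]]]. Qed.
Let ghost_mul_edge : forall e f, mul (ss e) (se f) = if e == f then pv (r e) else 0.
Proof. by case: LKE => _ [[_ [_ [_ []]]]]. Qed.
Let gen_span : forall x, span (fun y => exists (g : lgen V Ed) (w : seq (lgen V Ed)),
                     y = foldl mul (gen g) (map gen w)) x.
Proof. by case: LKE => _ [_ []]. Qed.

Lemma edge_mul_vertex e w : mul (se e) (pv w) = if r e == w then se e else 0.
Proof.
rewrite -{1}(edge_vertices e).2 -mulA vertex_mul_vertex.
by case: ifP => _; rewrite ?(edge_vertices e).2.
Qed.

Lemma vertex_mul_edge w e : mul (pv w) (se e) = if w == s e then se e else 0.
Proof.
case: eqP => [->|/eqP ne]; first exact: (edge_vertices e).1.
by rewrite -(edge_vertices e).1 mulA vertex_mul_vertex (negbTE ne) mul0l.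
Qed.

Lemma vertex_mul_ghost w f : mul (pv w) (ss f) = if w == r f then ss f else 0.
Proof.
case: eqP => [->|/eqP ne]; first exact: (ghost_vertices f).1.
by rewrite -(ghost_vertices f).1 mulA vertex_mul_vertex (negbTE ne) mul0l.
Qed.

Lemma path_el_mul_vertex lam w :
  mul (PE lam) (pv w) = if grng r lam == w then PE lam else 0.
Proof.
case: lam => v es; elim/last_ind: es => [|es e _]; first by rewrite vertex_mul_vertex.
rewrite /path_el /grng /= !map_rcons foldl_rcons last_rcons -mulA edge_mul_vertex.
by case: ifP.
Qed.

Lemma path_el_mul_range lam : PE lam = mul (PE lam) (GE (grng r lam, [::])).
Proof. by rewrite /ghost_el /= path_el_mul_vertex eqxx. Qed.

Lemma path_el_mul_edge lam e : mul (PE lam) (se e) =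
  if grng r lam == s e then PE (lam.1, rcons lam.2 e) else 0.
Proof.
case: ifP => lam_e; first by rewrite /path_el /= map_rcons foldl_rcons.
by rewrite -(edge_vertices e).1 mulA path_el_mul_vertex lam_e mul0l.
Qed.

Lemma ghost_el_mul_vertex mu u :
  mul (GE mu) (pv u) = if gsrc mu == u then GE mu else 0.
Proof.
case: mu => w fs; rewrite /ghost_el /gsrc /= foldr_mulr // vertex_mul_vertex.
by case: ifP => _ //; rewrite foldr_mul0.
Qed.

Lemma ghost_el_mul_ghost w fs f : mul (GE (w, fs)) (ss f) =
  if w == r f then GE (s f, f :: fs) else 0.
Proof.
rewrite /ghost_el /= foldr_mulr // vertex_mul_ghost rev_cons map_rcons foldr_rcons.
by rewrite (ghost_vertices f).2; case: ifP => _ //; rewrite foldr_mul0.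
Qed.

Lemma ghost_el_mul_edge w f fs e : is_gpath s r (w, f :: fs) ->
  mul (GE (w, f :: fs)) (se e) = if f == e then GE (r f, fs) else 0.
Proof.
rewrite /is_gpath /= => /andP [/eqP <- _].
rewrite /ghost_el /= rev_cons map_rcons foldr_rcons (ghost_vertices f).2.
by rewrite foldr_mulr // ghost_mul_edge; case: ifP => _ //; rewrite foldr_mul0.
Qed.

Lemma leavitt_filtration_monomial lam mu n : is_gpath s r lam -> is_gpath s r mu ->
  (glen lam + glen mu <= n)%N -> W n (mul (PE lam) (GE mu)).
Proof. by move=> lam_path mu_path len_le; apply: span_in; exists lam, mu. Qed.

Lemma is_gpath_behead w f fs : is_gpath s r (w, f :: fs) -> is_gpath s r (r f, fs).
Proof.
by rewrite /is_gpath /=; case: fs => [|f' fs] //= /andP [_ /andP [/eqP -> ->]]; rewrite eqxx.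
Qed.

Lemma is_gpath_ghost_cons w fs f : is_gpath s r (w, fs) -> w = r f ->
  is_gpath s r (s f, f :: fs).
Proof.
by rewrite /is_gpath /= eqxx; case: fs => [|f' fs] //= /andP [/eqP -> ->] ->; rewrite eqxx.
Qed.

Section MonomialTimesGenerator.
Variables (lam mu : gpath V Ed) (a : nat).
Hypotheses (lam_path : is_gpath s r lam) (mu_path : is_gpath s r mu).
Hypothesis len_le : (glen lam + glen mu <= a)%N.

Lemma monomial_mul_vertex u : W a.+1 (mul (mul (PE lam) (GE mu)) (pv u)).
Proof.
rewrite -mulA ghost_el_mul_vertex; case: ifP => _; last by rewrite mul0r; apply: span0.
by apply: leavitt_filtration_monomial => //; apply: leqW.
Qed.

(* [lam mu^* e] is [lam e] if [mu] is a vertex, and [lam mu'^*] or [0] if [mu = f mu']. *)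
Lemma monomial_mul_edge e : W a.+1 (mul (mul (PE lam) (GE mu)) (se e)).
Proof.
case: mu mu_path len_le => w [|f fs] mu_path' len_le'.
  rewrite /ghost_el /= -mulA vertex_mul_edge.
  case: ifP => [/eqP w_se|_]; last by rewrite mul0r; apply: span0.
  rewrite path_el_mul_edge; case: ifP => [/eqP lam_se|_]; last exact: span0.
  rewrite path_el_mul_range; apply: leavitt_filtration_monomial => //.
    by case: lam lam_path lam_se {len_le'} => v es; rewrite is_gpath_rcons => -> /= ->.
  by rewrite /glen size_rcons addn0; rewrite /glen addn0 in len_le'.
rewrite -mulA ghost_el_mul_edge //; case: ifP => _; last by rewrite mul0r; apply: span0.
apply: leavitt_filtration_monomial => //; first exact: is_gpath_behead mu_path'.
by apply/leqW/(leq_trans _ len_le'); rewrite leq_add2l leqnSn.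
Qed.

Lemma monomial_mul_ghost f : W a.+1 (mul (mul (PE lam) (GE mu)) (ss f)).
Proof.
case: mu mu_path len_le => w fs mu_path' len_le'.
rewrite -mulA ghost_el_mul_ghost; case: ifP => [/eqP w_rf|_]; last first.
  by rewrite mul0r; apply: span0.
apply: leavitt_filtration_monomial => //; first exact: is_gpath_ghost_cons mu_path' w_rf.
by rewrite /glen /= addnS ltnS.
Qed.

End MonomialTimesGenerator.

Lemma leavitt_filtration_mul_gen a x g : W a x -> W a.+1 (mul x (gen g)).
Proof.
move=> Wx; apply: (span_mull mul_Kalg Wx) => _ [lam [mu [lam_path [mu_path [len_le ->]]]]].
case: g => [u|e|f] /=.
- exact: monomial_mul_vertex.
- exact: monomial_mul_edge.
- exact: monomial_mul_ghost.
Qed.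

Lemma leavitt_filtration1_gen g : W 1 (gen g).
Proof.
case: g => [v|e|f] /=.
- have := @leavitt_filtration_monomial (v, [::]) (v, [::]) 1 erefl erefl erefl.
  by rewrite /path_el /ghost_el /= vertex_mul_vertex eqxx.
- have := @leavitt_filtration_monomial (s e, [:: e]) (r e, [::]) 1.
  rewrite /path_el /ghost_el /= (edge_vertices e).1 (edge_vertices e).2.
  by apply => //; apply: is_gpath_edge.
- have := @leavitt_filtration_monomial (r f, [::]) (s f, [:: f]) 1.
  rewrite /path_el /ghost_el /= (ghost_vertices f).2 (ghost_vertices f).1.
  by apply => //; apply: is_gpath_edge.
Qed.

Lemma leavitt_filtration_mono n x : W n x -> W n.+1 x.
Proof.
apply: sub_span => _ [lam [mu [lam_path [mu_path [len_le ->]]]]].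
by apply: leavitt_filtration_monomial => //; apply: leqW.
Qed.

Lemma leavitt_filtration_foldl_gen l k x : (forall z, z \in l -> exists g, z = gen g) ->
  W k x -> W (k + size l)%N (foldl mul x l).
Proof.
elim: l k x => [|z l IH] k x l_gen Wx /=; first by rewrite addn0.
have [g ->] := l_gen z (mem_head _ _).
rewrite -addSnnS; apply: IH; last exact: leavitt_filtration_mul_gen.
by move=> y yl; apply: l_gen; rewrite in_cons yl orbT.
Qed.

Lemma leavitt_filtration_exhaustive x : exists n, W n x.
Proof.
apply: (span_exhaustive leavitt_filtration_mono (fun n => @span_idem _ _ _)) (gen_span x).
move=> _ [g [w ->]]; exists (1 + size (map gen w))%N.
apply: leavitt_filtration_foldl_gen; last exact: leavitt_filtration1_gen.
elim: w => //= g' w IH z; rewrite in_cons => /orP [/eqP ->|/IH //]; by exists g'.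
Qed.

Definition monomial_letters (es fs : seq Ed) (w : V) : seq A :=
  map se es ++ rcons (map ss (rev fs)) (pv w).

Lemma monomial_foldl v es w fs :
  mul (PE (v, es)) (GE (w, fs)) = foldl mul (pv v) (monomial_letters es fs w).
Proof. by rewrite foldl_cat /ghost_el /= mul_foldr. Qed.

Lemma monomial_letters_gen es fs w z : z \in monomial_letters es fs w ->
  exists g, z = gen g.
Proof.
rewrite mem_cat mem_rcons in_cons => /orP [/mapP [e _ ->]|/orP [/eqP ->|/mapP [f _ ->]]].
- by exists (LEdge V e).
- by exists (LVert Ed w).
- by exists (LGhost V f).
Qed.

Lemma size_monomial_letters es fs w :
  size (monomial_letters es fs w) = (size es + size fs).+1.
Proof. by rewrite size_cat size_rcons !size_map size_rev addnS. Qed.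

Lemma leavitt_filtration_sub_powsp n x : W n x -> powsp mul (W 1) n.+2 x.
Proof.
apply: sub_span => _ [[v es] [[w fs] [_ [_ [len_le ->]]]]]; apply: span_in.
rewrite monomial_foldl; exists (pv v), (monomial_letters es fs w).
split; first by rewrite size_monomial_letters ltnS.
split; first exact: (leavitt_filtration1_gen (LVert Ed v)).
by split => // z /monomial_letters_gen [g ->]; apply: leavitt_filtration1_gen.
Qed.

Lemma leavitt_filtration_mul1 a x y : W a x -> W 1 y -> W (a + 3)%N (mul x y).
Proof.
move=> Wx Wy; apply: (span_mulr mul_Kalg Wy) => _ [[v es] [[w fs] [_ [_ [len_le ->]]]]].
rewrite monomial_foldl -foldl_mul //.
have := leavitt_filtration_foldl_gen (@monomial_letters_gen es fs w)
  (leavitt_filtration_mul_gen (LVert Ed v) Wx).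
apply: (filtration_le leavitt_filtration_mono).
by rewrite size_monomial_letters; rewrite /glen /= in len_le; lia.
Qed.

Lemma leavitt_filtration_bounded n : findim (W n) /\
  (dimn (W n) <= #|{: (V * n.-tuple (option Ed)) * (V * n.-tuple (option Ed))}|)%N.
Proof.
apply: (findim_span_fin (f := fun i : (V * n.-tuple (option Ed)) * (V * n.-tuple (option Ed)) =>
   mul (PE (i.1.1, pmap id i.1.2)) (GE (i.2.1, pmap id i.2.2)))).
apply: sub_span => _ [[v es] [[w fs] [_ [_ [len_le ->]]]]].
have [t1 t1_es] := pmap_tuple (leq_trans (leq_addr _ _) len_le).
have [t2 t2_fs] := pmap_tuple (leq_trans (leq_addl _ _) len_le).
by apply: span_in; exists ((v, t1), (w, t2)); rewrite /= t1_es t2_fs.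
Qed.

Theorem leavitt_trichotomy (R : realType) : trichotomy R mul W.
Proof.
apply: (@filtered_trichotomy R K A mul W ((#|V|.+1 * #|Ed|.+1) ^ 2)%N).
- exact: leavitt_filtration_mono.
- exact: leavitt_filtration_exhaustive.
- by move=> n; case: (leavitt_filtration_bounded n).
- by rewrite expn_gt0 muln_gt0.
- move=> n; apply: leq_trans (leavitt_filtration_bounded n).2 _.
  by rewrite !card_prod card_tuple card_option mulnn expnAC leq_exp2r ?leq_mul_expn.
- exact: leavitt_filtration_sub_powsp.
- move=> m; exists (3 * m)%N; apply: powsp_sub_filtration => //.
  + exact: leavitt_filtration_mono.
  + by move=> n; apply: span_idem.
  + exact: leavitt_filtration_mul1.
Qed.

End LeavittPathAlgebra.

Theorem corollary5p17 (R : realType) (K : fieldType)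
  (V Ed : finType) (s r : Ed -> V) :
  (forall (A : lmodType K) (mul : A -> A -> A) (b : gpath V Ed -> A),
     IsPathAlgebra s r mul b ->
     trichotomy R mul (path_filtration s r b)) /\
  (forall (A : lmodType K) (mul : A -> A -> A) (pv : V -> A) (se ss : Ed -> A),
     IsLeavitt s r mul pv se ss ->
     trichotomy R mul (leavitt_filtration s r mul pv se ss)).
Proof.
split=> [A mul b KE | A mul pv se ss LKE].
- exact: path_trichotomy KE R.
- exact: leavitt_trichotomy LKE R.
Qed.
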